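(* Assume $n \geq 2k$. Let $y = y_T\, y_{T^*}\, c_{\underline s,\underline t}$ and let $x' = x'_{T,T^*,\underline s,\underline t}$ be the simple tensor defined in the context. Then $e\,y\,x' \neq 0$ if and only if $s_i \neq t_i$ for all pairs $(s_i,t_i)$, $i=1,\dots,k-r$. Hence $eM_{\lambda,\mu} \neq 0$ precisely when this condition can be satisfied (for some choice of $\underline s,\underline t,T,T^*$ with $T,T^*$ of shapes $\lambda,\mu$), and in that case $eM_{\lambda,\mu}$ is the linear span of all the nonzero vectors $e\,y\,x'$, with $y$ and $x'$ of this form and $T,T^*$ of shapes $\lambda,\mu$.
   Context: Let $\mathfrak g = \mathfrak{gl}_n$ (complex), $V=\mathbb C^n$ the natural module with standard basis $v_1,\dots,v_n$, $V^*$ its dual with dual basis $v_1^*,\dots,v_n^*$, and $M = V^{\otimes k}\otimes (V^* )^{\otimes k}$. For $i,j\in\{1,\dots,k\}$ the contraction map $c_{i,j}$ on $M$ is $c_{i,j}(u_1\otimes\cdots\otimes u_k\otimes w_1^*\otimes\cdots\otimes w_k^* ) = \mathrm{tr}(u_iw_j^* )\sum_{\ell=1}^n u_1\otimes\cdots\otimes v_\ell\otimes\cdots\otimes u_k\otimes w_1^*\otimes\cdots\otimes v_\ell^*\otimes\cdots\otimes w_k^*$, with $v_\ell$ in the $i$th slot of $V^{\otimes k}$ and $v_\ell^*$ in the $j$th slot of $(V^* )^{\otimes k}$. Put $p_i = \frac1n c_{i,i}$ (commuting idempotents) and $e = (\mathrm{id}-p_1)(\mathrm{id}-p_2)\cdots(\mathrm{id}-p_k)$,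 so that $eM\cong \mathfrak{sl}_n^{\otimes k}$. For $0\le r\le k$, let $\underline s=\{s_1<\dots<s_{k-r}\}$ and $\underline t=\{t_1,\dots,t_{k-r}\}$ be ordered subsets of $\{1,\dots,k\}$ of size $k-r$, and $c_{\underline s,\underline t} = c_{s_1,t_1}\cdots c_{s_{k-r},t_{k-r}}$. Let $\lambda,\mu$ be partitions of $r$, $T$ a standard tableau of shape $\lambda$ with entries in $\underline s^c=\{1,\dots,k\}\setminus\underline s$, and $T^*$ a standard tableau of shape $\mu$ with entries in $\underline t^c$. The Young symmetrizer is $y_T = (\sum_{\rho\in R_T}\rho)(\sum_{\gamma\in C_T}\mathrm{sgn}(\gamma)\gamma)$ ($R_T$, $C_T$ the row and column groups of $T$), acting on $V^{\otimes k}$ by place permutations; $y_{T^*}$ acts likewise on $(V^* )^{\otimes k}$. The simple tensor $x'=x'_{T,T^*,\underline s,\underline t}=u_1'\otimes\cdots\otimes u_k'\otimes (w_1^* )'\otimes\cdots\otimes (w_k^* )'$ is defined by $u_p' = v_{r+i}$ if $p=s_i$, $u_p'=v_j$ if $p\in\underline s^c$ lies in row $j$ of $T$; $(w_p^* )' = v_{r+i}^*$ if $p=t_i$, $(w_p^* )'=v^*_{n-j+1}$ if $p\in\underline t^c$ lies in row $j$ of $T^*$. (The vector $yx'$ equals $yx$ for the analogous tensor $x$ with $v_1, v_1^*$ in the slots $s_i,t_i$, and is a maximal vector of highest weight $(\lambda,\mu)$.) $M_{\lambda,\mu}$ denotes the span of all such maximal vectors $y x'$ over all pairs $\underline s,\underline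 t$ of ordered subsets of size $k-r$ and all standard tableaux $T$ (resp. $T^*$) of shape $\lambda$ (resp. $\mu$) with entries in $\underline s^c$ (resp. $\underline t^c$); for $n\ge 2k$ these are the irreducible modules for $\mathrm{End}_{\mathfrak g}(M)$. *)

From HB Require Import structures.
From mathcomp Require Import all_boot all_order all_algebra all_fingroup.
Set Implicit Arguments. Unset Strict Implicit. Unset Printing Implicit Defensive.
Import GRing.Theory Num.Theory.
Local Open Scope ring_scope.

Definition is_partition (r : nat) (l : seq nat) : bool :=
  [&& sorted (fun a b => b <= a)%N l, all (fun x => 0 < x)%N l & sumn l == r].

Definition in_shape (l : seq nat) (a b : nat) : bool :=
  (a < size l)%N && (b < nth 0%N l a)%N.

Section Tensors.
Variables (C : fieldType) (n k : nat).

(* M = V^{(x)k} (x) (V^* )^{(x)k}, V = C^n, in coordinates w.r.t. the basis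
   v_{f 1} (x) .. (x) v_{f k} (x) vstar_{g 1} (x) .. (x) vstar_{g k}   (indices 0-based). *)
Definition idx := ({ffun 'I_k -> 'I_n} * {ffun 'I_k -> 'I_n})%type.
Definition tensor := {ffun idx -> GRing.regular C}.

Definition basis (q : idx) : tensor := [ffun q' => (q' == q)%:R].

Definition lin_ext (B : idx -> tensor) (x : tensor) : tensor :=
  \sum_(q : idx) x q *: B q.

Definition upd (f : {ffun 'I_k -> 'I_n}) (i : 'I_k) (l : 'I_n) : {ffun 'I_k -> 'I_n} :=
  [ffun a => if a == i then l else f a].

Definition contr (i j : 'I_k) : tensor -> tensor :=
  lin_ext (fun q => (q.1 i == q.2 j)%:R *:
                     \sum_(l : 'I_n) basis (upd q.1 i l, upd q.2 j l)).

Definition projp (i : 'I_k) (x : tensor) : tensor := n%:R^-1 *: contr i i x.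

Definition eop (x : tensor) : tensor :=
  foldr (fun i y => y - projp i y) x (enum 'I_k).

(* place permutations: sigma . (u_1 (x) .. (x) u_k) = u_{sigma^-1 1} (x) .. (x) u_{sigma^-1 k},
   on the V-factors (actV) resp. on the V^*-factors (actVs) *)
Definition actV (s : {perm 'I_k}) : tensor -> tensor :=
  lin_ext (fun q => basis ([ffun a => q.1 ((s^-1)%g a)], q.2)).
Definition actVs (s : {perm 'I_k}) : tensor -> tensor :=
  lin_ext (fun q => basis (q.1, [ffun a => q.2 ((s^-1)%g a)])).

Definition sgn (s : {perm 'I_k}) : C := (-1) ^+ odd_perm s.

Definition young (act : {perm 'I_k} -> tensor -> tensor)
    (R Cg : {set {perm 'I_k}}) (x : tensor) : tensor :=
  \sum_(rho in R) act rho (\sum_(gam in Cg) sgn gam *: act gam x).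

(* A tableau with entry set S is a map T : entries -> cells (row, column), 0-based. *)
Definition std_tableau (l : seq nat) (S : pred 'I_k) (T : 'I_k -> 'I_k * 'I_k) : Prop :=
  [/\ forall p, S p -> in_shape l (T p).1 (T p).2,
      forall p q, S p -> S q -> T p = T q -> p = q,
      forall a b : nat, in_shape l a b ->
        exists2 p, S p & (((T p).1 : nat) = a /\ ((T p).2 : nat) = b),
      forall p q, S p -> S q -> (T p).1 = (T q).1 -> ((T p).2 < (T q).2)%N -> (p < q)%N
    & forall p q, S p -> S q -> (T p).2 = (T q).2 -> ((T p).1 < (T q).1)%N -> (p < q)%N].

Definition row_grp (S : pred 'I_k) (T : 'I_k -> 'I_k * 'I_k) : {set {perm 'I_k}} :=
  [set s : {perm 'I_k} | [forall p, if S p then (T (s p)).1 == (T p).1 else s p == p]].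
Definition col_grp (S : pred 'I_k) (T : 'I_k -> 'I_k * 'I_k) : {set {perm 'I_k}} :=
  [set s : {perm 'I_k} | [forall p, if S p then (T (s p)).2 == (T p).2 else s p == p]].

Variable r : nat.

(* data (s, t, T, Ts) : s, t : ordered subsets of size k-r given as maps I_(k-r) -> I_k *)
Definition data := ({ffun 'I_(k - r) -> 'I_k} * {ffun 'I_(k - r) -> 'I_k}
                     * {ffun 'I_k -> 'I_k * 'I_k} * {ffun 'I_k -> 'I_k * 'I_k})%type.

Definition ds (d : data) := d.1.1.1.
Definition dt (d : data) := d.1.1.2.
Definition dT (d : data) := d.1.2.
Definition dTs (d : data) := d.2.

Definition Sc (d : data) : pred 'I_k := fun p => p \notin codom (ds d).
Definition Tc (d : data) : pred 'I_k := fun p => p \notin codom (dt d).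

Definition valid (lam mu : seq nat) (d : data) : Prop :=
  [/\ forall i j : 'I_(k - r), (i < j)%N -> (ds d i < ds d j)%N,
      injective (dt d),
      std_tableau lam (Sc d) (dT d)
    & std_tableau mu (Tc d) (dTs d)].

(* the simple tensor x' (0-based indices: v_{r+i} in slot s_i, v_j in row j of T,
   vstar_{r+i} in slot t_i, vstar_{n-j+1} in row j of Tstar) *)
Definition uidx (d : data) (p : 'I_k) : nat :=
  if [pick i | ds d i == p] is Some i then (r + i)%N else ((dT d p).1 : nat).
Definition widx (d : data) (p : 'I_k) : nat :=
  if [pick i | dt d i == p] is Some i then (r + i)%N else (n - ((dTs d p).1).+1)%N.
Definition xprime (d : data) : tensor :=
  [ffun q : idx => ([forall p, (q.1 p == uidx d p :> nat) && (q.2 p == widx d p :> nat)])%:R].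

Definition cst (d : data) (x : tensor) : tensor :=
  foldr (fun i y => contr (ds d i) (dt d i) y) x (enum 'I_(k - r)).

Definition yx (d : data) : tensor :=
  young actV (row_grp (Sc d) (dT d)) (col_grp (Sc d) (dT d))
    (young actVs (row_grp (Tc d) (dTs d)) (col_grp (Tc d) (dTs d))
       (cst d (xprime d))).

Definition cond (d : data) : Prop := forall i : 'I_(k - r), ds d i != dt d i.

Definition inspan (P : data -> Prop) (G : data -> tensor) (v : tensor) : Prop :=
  exists (F : seq data) (a : data -> C),
    (forall d, d \in F -> P d) /\ v = \sum_(d <- F) a d *: G d.

End Tensors.

From HB Require Import structures.
From mathcomp Require Import all_boot all_order all_algebra all_fingroup.
From mathcomp Require Import zify.
Import GRing.Theory Num.Theory.
Local Open Scope ring_scope.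

Set Implicit Arguments. Unset Strict Implicit. Unset Printing Implicit Defensive.

(* If s_i = t_i for some i, then c_{s,t} x' contains the invariant tensor
   sum_l v_l (x) v_l^* in the V-slot and the V^*-slot s_i; the Young symmetrizers
   do not move that slot, so p_{s_i} fixes y x' and e kills it.
   Conversely, look at the coefficient of y x' on the basis tensor whose indices
   are those of x' itself. When s_i <> t_i for all i and n >= 2k, every slot of
   this basis tensor has distinct V- and V^*-indices, so every p_i vanishes there
   and e leaves the coefficient unchanged. That coefficient is |R_T| |R_T*| > 0:
   a column permutation of T that preserves the row labels of x' is trivial.
   The statements about M_(lam,mu) then follow from the linearity of e. *)

Section FunctionUpdate.
Variables (n k : nat).
Implicit Types (f g : {ffun 'I_k -> 'I_n}) (i j a : 'I_k) (l m : 'I_n).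

Lemma updE f i l a : upd f i l a = if a == i then l else f a.
Proof. by rewrite ffunE. Qed.

Lemma upd_id f i : upd f i (f i) = f.
Proof. by apply/ffunP => a; rewrite updE; case: eqP => // ->. Qed.

Lemma upd_upd f i l m : upd (upd f i l) i m = upd f i m.
Proof. by apply/ffunP => a; rewrite !updE; case: eqP. Qed.

Lemma updC f i j l m : i != j -> upd (upd f i l) j m = upd (upd f j m) i l.
Proof.
move=> ij; apply/ffunP => a; rewrite !updE.
by case: (eqVneq a j) => [->|//]; rewrite eq_sym (negbTE ij).
Qed.

Lemma upd_eqC f g i : (upd f i (g i) == g) = (upd g i (f i) == f).
Proof.
by apply/eqP/eqP => <-; rewrite upd_upd upd_id.
Qed.

Lemma upd_eq_at f g i l : upd f i l == g -> g i == l.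
Proof. by move/eqP <-; rewrite updE !eqxx. Qed.

Lemma upd2_eqC (f g F G : {ffun 'I_k -> 'I_n}) i j :
  [&& f i == g j, upd f i (F i) == F & upd g j (F i) == G] =
  [&& F i == G j, upd F i (f i) == f & upd G j (f i) == g].
Proof.
rewrite [upd f i _ == _]upd_eqC.
case: (eqVneq (f i) (g j)) => [fg|fg]; case: (eqVneq (F i) (G j)) => [FG|FG] //=.
- by rewrite FG [upd g j _ == _]upd_eqC fg.
- by case: (upd g j _ =P G) => [/eqP/upd_eq_at|]; rewrite ?andbF // eq_sym (negbTE FG).
- by case: (upd G j _ =P g) => [/eqP/upd_eq_at|]; rewrite ?andbF // eq_sym (negbTE fg).
Qed.

Lemma forall_upd (X : pred 'I_k) (h : 'I_k -> nat) f i m : X i ->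
  [forall p, X p ==> (upd f i m p == h p :> nat)] =
  (m == h i :> nat) && [forall p, ((p != i) && X p) ==> (f p == h p :> nat)].
Proof.
move=> Xi; apply/forallP/andP => [fX|[mi /forallP fX] p].
  split; first by have := fX i; rewrite Xi updE eqxx.
  apply/forallP => p; apply/implyP => /andP[pi Xp].
  by have := fX p; rewrite Xp updE (negbTE pi).
rewrite updE; case: (eqVneq p i) => [->|pi]; first by rewrite Xi.
by have := fX p; rewrite pi.
Qed.

Lemma forall_notin_cons (i : 'I_k) (s : seq 'I_k) (P : pred 'I_k) :
  [forall p, (p \notin i :: s) ==> P p] = [forall p, ((p != i) && (p \notin s)) ==> P p].
Proof. by apply: eq_forallb => p; rewrite in_cons negb_or. Qed.

End FunctionUpdate.

Section TensorCoordinates.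
Variables (C : fieldType) (n k : nat).
Local Notation tensor := (tensor C n k).
Local Notation idx := (idx n k).
Implicit Types (x y : tensor) (q : idx).

Lemma sum_delta (F : idx -> C) q0 : \sum_q F q * (q == q0)%:R = F q0.
Proof.
rewrite (bigD1 q0) //= eqxx mulr1 big1 ?addr0 // => q /negbTE ->; exact: mulr0.
Qed.

Lemma tensorZE c x q : (c *: x) q = c * x q.
Proof. by rewrite ffunE. Qed.

Lemma basisE q0 q : basis C q0 q = (q == q0)%:R :> C.
Proof. by rewrite ffunE. Qed.

Lemma lin_extE B x q : lin_ext B x q = \sum_q' x q' * B q' q :> C.
Proof. by rewrite /lin_ext sum_ffunE; apply: eq_bigr => q' _; rewrite tensorZE. Qed.

Lemma lin_extD B x y : lin_ext B (x + y) = lin_ext B x + lin_ext B y.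
Proof.
by rewrite /lin_ext -big_split /=; apply: eq_bigr => q _; rewrite ffunE scalerDl.
Qed.

Lemma lin_extZ B c x : lin_ext B (c *: x) = c *: lin_ext B x.
Proof. by rewrite /lin_ext scaler_sumr; apply: eq_bigr => q _; rewrite ffunE scalerA. Qed.

Lemma lin_ext_basis_can (phi psi : idx -> idx) x q :
  cancel phi psi -> cancel psi phi -> lin_ext (fun q => basis C (phi q)) x q = x (psi q).
Proof.
move=> phiK psiK; rewrite lin_extE -sum_delta; apply: eq_bigr => q' _.
rewrite ffunE; congr (_ * (nat_of_bool _)%:R).
by rewrite -{1}[q]psiK (can_eq phiK).
Qed.

Lemma contrE i j x q :
  contr i j x q = (q.1 i == q.2 j)%:R *
     \sum_(m : 'I_n) x (upd q.1 i m, upd q.2 j m) :> C.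
Proof.
pose h m : idx := (upd q.1 i m, upd q.2 j m).
have coord q' : ((q'.1 i == q'.2 j)%:R *:
                 \sum_l basis C (upd q'.1 i l, upd q'.2 j l)) q
                = (q.1 i == q.2 j)%:R * (q' == h (q'.1 i))%:R.
  rewrite tensorZE sum_ffunE (bigD1 (q.1 i)) //= big1 ?addr0; last first.
    move=> l nl; rewrite basisE; case: eqP => // qE.
    by rewrite qE /= updE eqxx eqxx in nl.
  rewrite basisE -!natrM !mulnb; congr (nat_of_bool _)%:R.
  case: q' q @h => [f g] [F G]; rewrite /= -!pair_eqE /= ![_ == upd _ _ _]eq_sym.
  exact: upd2_eqC.
rewrite /contr lin_extE.
under eq_bigr => q' _ do rewrite coord mulrCA.
rewrite -mulr_sumr; congr (_ * _).
have split_m q' : (q' == h (q'.1 i))%:R = \sum_m (q' == h m)%:R :> C.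
  rewrite (bigD1 (q'.1 i)) //= big1 ?addr0 // => m nm.
  by case: eqP => // Eq; case/eqP: nm; rewrite Eq /h /= updE eqxx.
under eq_bigr => q' _ do rewrite split_m mulr_sumr.
by rewrite exchange_big /=; apply: eq_bigr => m _; rewrite sum_delta.
Qed.

Lemma actVE s x q : actV s x q = x ([ffun a => q.1 (s a)], q.2).
Proof.
rewrite /actV.
by apply: (lin_ext_basis_can (psi := fun q => ([ffun a => q.1 (s a)], q.2))) => -[f g];
  congr pair; apply/ffunP => a; rewrite !ffunE ?permK ?permKV.
Qed.

Lemma actVsE s x q : actVs s x q = x (q.1, [ffun a => q.2 (s a)]).
Proof.
rewrite /actVs.
by apply: (lin_ext_basis_can (psi := fun q => (q.1, [ffun a => q.2 (s a)]))) => -[f g];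
  congr pair; apply/ffunP => a; rewrite !ffunE ?permK ?permKV.
Qed.

Lemma youngVE R Cg x q :
  young (@actV C n k) R Cg x q = \sum_(rho in R) \sum_(gam in Cg)
     sgn C gam * x ([ffun a => q.1 (rho (gam a))], q.2) :> C.
Proof.
rewrite /young sum_ffunE; apply: eq_bigr => rho _.
rewrite actVE sum_ffunE; apply: eq_bigr => gam _.
by rewrite tensorZE actVE /=; congr (_ * x (_, _)); apply/ffunP => a; rewrite !ffunE.
Qed.

Lemma youngVsE R Cg x q :
  young (@actVs C n k) R Cg x q = \sum_(rho in R) \sum_(gam in Cg)
     sgn C gam * x (q.1, [ffun a => q.2 (rho (gam a))]) :> C.
Proof.
rewrite /young sum_ffunE; apply: eq_bigr => rho _.
rewrite actVsE sum_ffunE; apply: eq_bigr => gam _.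
by rewrite tensorZE actVsE /=; congr (_ * x (_, _)); apply/ffunP => a; rewrite !ffunE.
Qed.

End TensorCoordinates.

Section TracelessProjection.
Variables (C : fieldType) (n k : nat).
Local Notation tensor := (tensor C n k).
Implicit Types (x y : tensor) (L : seq 'I_k).

Definition eops L x : tensor := foldr (fun i y => y - projp i y) x L.

Lemma eop_eops x : eop x = eops (enum 'I_k) x.
Proof. by []. Qed.

Lemma contrD i j x y : contr i j (x + y) = contr i j x + contr i j y.
Proof. exact: lin_extD. Qed.

Lemma contrZ i j c x : contr i j (c *: x) = c *: contr i j x.
Proof. exact: lin_extZ. Qed.

Lemma contr0 (i j : 'I_k) : contr i j (0 : tensor) = 0.
Proof. by have := contrZ i j 0 0; rewrite !scale0r. Qed.

Lemma eopsD L x y : eops L (x + y) = eops L x + eops L y.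
Proof. by elim: L => //= i L ->; rewrite /projp contrD scalerDr opprD addrACA. Qed.

Lemma eopsZ L c x : eops L (c *: x) = c *: eops L x.
Proof. by elim: L => //= i L ->; rewrite /projp contrZ scalerBr !scalerA mulrC. Qed.

Lemma eops0 L : eops L 0 = 0.
Proof. by have := eopsZ L 0 0; rewrite !scale0r. Qed.

Lemma eop_sum I (F : seq I) (a : I -> C) (G : I -> tensor) :
  eop (\sum_(d <- F) a d *: G d) = \sum_(d <- F) a d *: eop (G d).
Proof.
elim: F => [|d F IH]; first by rewrite !big_nil eop_eops eops0.
by rewrite !big_cons eop_eops eopsD eopsZ -!eop_eops IH.
Qed.

Lemma eops_offdiagE L x (q : idx n k) : (forall p, q.1 p != q.2 p) -> eops L x q = x q.
Proof.
move=> offdiag; elim: L => //= i L IH.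
by rewrite !ffunE /projp contrE (negbTE (offdiag i)) mul0r scaler0 subr0 IH.
Qed.

End TracelessProjection.

Section DiagonalSlot.
Variables (C : fieldType) (n k : nat).
Local Notation tensor := (tensor C n k).
Implicit Types (w z : tensor) (a i j : 'I_k) (s : {perm 'I_k}).

(* [w] is (a tensor in the other slots) times sum_l v_l (x) v_l^* in the V-slot
   and the V^*-slot [a]; such tensors are fixed by p_a, so killed by id - p_a. *)
Definition diag_at a w := forall f g l,
  w (f, g) = (f a == g a)%:R * w (upd f a l, upd g a l) :> C.

Lemma diag_at_contr_same a z : diag_at a (contr a a z).
Proof.
move=> f g l; rewrite !contrE /= !updE !eqxx mul1r.
by congr (_ * _); apply: eq_bigr => m _; rewrite !upd_upd.
Qed.

Lemma diag_at_contr a i j w :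
  i != a -> j != a -> diag_at a w -> diag_at a (contr i j w).
Proof.
move=> ia ja dw f g l.
have [ai aj] : (a == i) = false /\ (a == j) = false.
  by rewrite !(eq_sym a) (negbTE ia) (negbTE ja).
rewrite !contrE /= !updE (negbTE ia) (negbTE ja) mulrCA; congr (_ * _).
rewrite mulr_sumr; apply: eq_bigr => m _.
by rewrite (dw _ _ l) !updE ai aj updC // [upd (upd g j m) a l]updC.
Qed.

Lemma diag_at_actV a s w : s a = a -> diag_at a w -> diag_at a (actV s w).
Proof.
move=> sa dw f g l; rewrite !actVE /= (dw _ _ l) ffunE sa; congr (_ * w (_, _)).
by apply/ffunP => b; rewrite !ffunE -{2}sa (inj_eq perm_inj).
Qed.

Lemma diag_at_actVs a s w : s a = a -> diag_at a w -> diag_at a (actVs s w).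
Proof.
move=> sa dw f g l; rewrite !actVsE /= (dw _ _ l) ffunE sa; congr (_ * w (_, _)).
by apply/ffunP => b; rewrite !ffunE -{2}sa (inj_eq perm_inj).
Qed.

Lemma diag_at0 a : diag_at a 0.
Proof. by move=> f g l; rewrite !ffunE mulr0. Qed.

Lemma diag_atD a w z : diag_at a w -> diag_at a z -> diag_at a (w + z).
Proof. by move=> dw dz f g l; rewrite !ffunE (dw _ _ l) (dz _ _ l) mulrDr. Qed.

Lemma diag_atZ a c w : diag_at a w -> diag_at a (c *: w).
Proof. by move=> dw f g l; rewrite !tensorZE (dw _ _ l) mulrCA. Qed.

Lemma diag_at_sum a I (r : seq I) (P : pred I) (F : I -> tensor) :
  (forall t, P t -> diag_at a (F t)) -> diag_at a (\sum_(t <- r | P t) F t).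
Proof. by move=> dF; apply: (big_ind (diag_at a)); [exact: diag_at0 | exact: diag_atD |]. Qed.

Lemma diag_at_young a act (R Cg : {set {perm 'I_k}}) w :
  (forall s z, s a = a -> diag_at a z -> diag_at a (act s z)) ->
  {in R, forall s, s a = a} -> {in Cg, forall s, s a = a} ->
  diag_at a w -> diag_at a (young act R Cg w).
Proof.
move=> dact Ra Cga dw; apply: diag_at_sum => rho /Ra rho_a; apply: (dact) => //.
by apply: diag_at_sum => gam /Cga gam_a; apply: diag_atZ; apply: dact.
Qed.

Lemma projp_diag_at a w : n%:R != 0 :> C -> diag_at a w -> projp a w = w.
Proof.
move=> n0 dw; apply/ffunP => -[f g]; rewrite tensorZE contrE /=.
have -> : \sum_(m < n) w (upd f a m, upd g a m) = w (f, upd g a (f a)) *+ n.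
  rewrite (eq_bigr (fun _ => w (f, upd g a (f a)))) ?sumr_const ?card_ord // => m _.
  by rewrite (dw _ _ (f a)) !updE !eqxx mul1r !upd_upd upd_id.
case: (eqVneq (f a) (g a)) => [fg|fg].
  by rewrite mul1r fg upd_id -[w (f, g) *+ n]mulr_natr mulrCA mulVf // mulr1.
by rewrite mul0r mulr0 (dw _ _ (f a)) (negbTE fg) mul0r.
Qed.

Lemma eops_diag_at a L w : a \notin L -> diag_at a w -> diag_at a (eops L w).
Proof.
elim: L => //= b L IH; rewrite inE negb_or => /andP[ab aL] dw.
have dLw := IH aL dw; rewrite /projp -scaleN1r.
by apply: diag_atD => //; do 2 apply: diag_atZ; apply: diag_at_contr; rewrite // eq_sym.
Qed.

Lemma eops_diag_at_eq0 a L w : n%:R != 0 :> C -> a \in L -> diag_at a w -> eops L w = 0.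
Proof.
move=> n0; elim: L => //= b L IH; rewrite inE => aL dw.
case: (boolP (a \in L)) => [aL'|naL].
  by rewrite IH // /projp contr0 scaler0 subr0.
have /eqP ab : a == b by move: aL; rewrite (negbTE naL) orbF.
by rewrite -ab projp_diag_at ?subrr //; apply: eops_diag_at.
Qed.

End DiagonalSlot.

Section TableauGroups.
Variables (k : nat) (S : pred 'I_k) (T : 'I_k -> 'I_k * 'I_k).
Implicit Types (s : {perm 'I_k}) (p : 'I_k).

Lemma row_grp_fix s p : s \in row_grp S T -> ~~ S p -> s p = p.
Proof. by rewrite inE => /forallP /(_ p); case: (S p) => // /eqP. Qed.

Lemma col_grp_fix s p : s \in col_grp S T -> ~~ S p -> s p = p.
Proof. by rewrite inE => /forallP /(_ p); case: (S p) => // /eqP. Qed.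

Lemma row_grp_row s p : s \in row_grp S T -> S p -> (T (s p)).1 = (T p).1.
Proof. by rewrite inE => /forallP /(_ p); case: (S p) => // /eqP. Qed.

Lemma col_grp_col s p : s \in col_grp S T -> S p -> (T (s p)).2 = (T p).2.
Proof. by rewrite inE => /forallP /(_ p); case: (S p) => // /eqP. Qed.

Lemma row_grp1 : 1%g \in row_grp S T.
Proof. by rewrite inE; apply/forallP => p; rewrite perm1; case: (S p). Qed.

Lemma col_grp1 : 1%g \in col_grp S T.
Proof. by rewrite inE; apply/forallP => p; rewrite perm1; case: (S p). Qed.

Lemma perm_stable s p : (forall p, ~~ S p -> s p = p) -> S p -> S (s p).
Proof.
move=> sfix Sp; apply: contraT => nS.
by have /perm_inj sp := sfix _ nS; rewrite sp Sp in nS.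
Qed.

Lemma col_grp_row_fixed s : {in S &, injective T} -> s \in col_grp S T ->
  {in S, forall p, (T (s p)).1 = (T p).1} -> s = 1%g.
Proof.
move=> injT sC srow; apply/permP => p; rewrite perm1.
have [Sp|nSp] := boolP (S p); last exact: col_grp_fix.
have Ssp : S (s p) by apply: perm_stable Sp => q; apply: col_grp_fix.
apply: injT => //; move: (srow p Sp) (col_grp_col sC Sp).
by case: (T (s p)) (T p) => a b [c e] /= -> ->.
Qed.

Variable h : 'I_k -> nat.
Hypothesis h_row : {in S &, forall p q, (h p == h q) = ((T p).1 == (T q).1)}.

Lemma row_grp_label s p : s \in row_grp S T -> h (s p) = h p.
Proof.
move=> sR; have [Sp|nSp] := boolP (S p); last by rewrite (row_grp_fix sR nSp).
have Ssp : S (s p) by apply: perm_stable Sp => q; apply: row_grp_fix.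
by apply/eqP; rewrite h_row // (row_grp_row sR Sp).
Qed.

Lemma col_grp_label_fixed s : {in S &, injective T} -> s \in col_grp S T ->
  [forall p, S p ==> (h (s p) == h p)] = (s == 1%g).
Proof.
move=> injT sC; apply/forallP/eqP => [hfix|-> p]; last by rewrite perm1 eqxx implybT.
apply: col_grp_row_fixed => // p Sp; apply/eqP.
have Ssp : S (s p) by apply: perm_stable Sp => q; apply: col_grp_fix.
by rewrite -h_row //; move/implyP: (hfix p); apply.
Qed.

End TableauGroups.

Section ContractedSimpleTensor.
Variables (C : fieldType) (n k r : nat) (d : data k r).
Hypotheses (hrk : (r <= k)%N) (hkn : (k <= n)%N).
Hypotheses (inj_s : injective (ds d)) (inj_t : injective (dt d)).
Local Notation tensor := (tensor C n k).
Implicit Types (J : seq 'I_(k - r)) (f g : {ffun 'I_k -> 'I_n}).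

Definition csts J (x : tensor) : tensor :=
  foldr (fun i y => contr (ds d i) (dt d i) y) x J.

Lemma cst_csts x : cst d x = csts (enum 'I_(k - r)) x.
Proof. by []. Qed.

Definition csts_support J f g : bool :=
  [&& [forall p, (p \notin map (ds d) J) ==> (f p == uidx d p :> nat)],
      [forall p, (p \notin map (dt d) J) ==> (g p == widx n d p :> nat)]
    & all (fun i => f (ds d i) == g (dt d i)) J].

Lemma uidx_s i : uidx d (ds d i) = (r + i)%N.
Proof.
by rewrite /uidx; case: pickP => [j /eqP /inj_s -> //|/(_ i)]; rewrite eqxx.
Qed.

Lemma widx_t i : widx n d (dt d i) = (r + i)%N.
Proof.
by rewrite /widx; case: pickP => [j /eqP /inj_t -> //|/(_ i)]; rewrite eqxx.
Qed.

Lemma csts_xprimeE J q : uniq J -> csts J (xprime C n d) q = (csts_support J q.1 q.2)%:R.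
Proof.
case: q => f g; elim: J f g => [|i J IH] f g /=.
  move=> _; rewrite ffunE /csts_support /= andbT; congr (nat_of_bool _)%:R.
  apply/forallP/andP => [fg|[/forallP fu /forallP gw] p].
    by split; apply/forallP => p; case/andP: (fg p).
  by rewrite fu gw.
case/andP => iJ uJ; rewrite contrE /=.
have lt_ri : (r + i < n)%N by have := ltn_ord i; lia.
have updated m : csts_support J (upd f (ds d i) m) (upd g (dt d i) m) =
    (m == r + i :> nat) &&
    [&& [forall p, (p \notin map (ds d) (i :: J)) ==> (f p == uidx d p :> nat)],
        [forall p, (p \notin map (dt d) (i :: J)) ==> (g p == widx n d p :> nat)]
      & all (fun j => f (ds d j) == g (dt d j)) J].
  rewrite /csts_support (forall_upd (X := fun p => p \notin map (ds d) J)) ?(mem_map inj_s) //.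
  rewrite (forall_upd (X := fun p => p \notin map (dt d) J)) ?(mem_map inj_t) // uidx_s widx_t.
  have -> : all (fun j => upd f (ds d i) m (ds d j) == upd g (dt d i) m (dt d j)) J =
            all (fun j => f (ds d j) == g (dt d j)) J.
    apply: eq_in_all => j jJ; rewrite !updE (inj_eq inj_s) (inj_eq inj_t).
    by have -> : (j == i) = false by apply: contraNF iJ => /eqP <-.
  by rewrite /= !forall_notin_cons; case: (m == r + i :> nat).
under eq_bigr => m _ do rewrite IH // updated.
rewrite (bigD1 (Ordinal lt_ri)) //= eqxx big1 ?addr0 => [|m]; last first.
  by rewrite -val_eqE => /negbTE ->.
rewrite -natrM mulnb /csts_support /=.
by case: (f _ == _); rewrite /= ?andbF.
Qed.

Lemma diag_at_csts i0 J x : ds d i0 = dt d i0 -> i0 \in J -> diag_at (ds d i0) (csts J x).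
Proof.
move=> st0; elim: J => //= j J IH; rewrite in_cons.
have [<- _|ne /= i0J] := eqVneq i0 j; first by rewrite -st0; apply: diag_at_contr_same.
apply: diag_at_contr; last exact: IH.
  by rewrite (inj_eq inj_s) eq_sym.
by rewrite st0 (inj_eq inj_t) eq_sym.
Qed.

End ContractedSimpleTensor.

Section YoungSymmetrizerValue.
Variables (C : fieldType) (n k r : nat) (d : data k r).
Hypotheses (hrk : (r <= k)%N) (hkn : (k <= n)%N).
Hypotheses (inj_s : injective (ds d)) (inj_t : injective (dt d)).
Hypotheses (inj_T : {in Sc d &, injective (dT d)}) (inj_Ts : {in Tc d &, injective (dTs d)}).

Lemma uidx_Sc p : Sc d p -> uidx d p = (dT d p).1.
Proof. by rewrite /uidx /Sc; case: pickP => // i /eqP <-; rewrite codom_f. Qed.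

Lemma widx_Tc p : Tc d p -> widx n d p = (n - ((dTs d p).1).+1)%N.
Proof. by rewrite /widx /Tc; case: pickP => // i /eqP <-; rewrite codom_f. Qed.

Lemma uidx_lt p : (uidx d p < n)%N.
Proof.
rewrite /uidx; case: pickP => [i _|_]; first by have := ltn_ord i; lia.
by have := ltn_ord (dT d p).1; lia.
Qed.

Lemma widx_lt p : (widx n d p < n)%N.
Proof.
have := ltn_ord p; rewrite /widx; case: pickP => [i _|_]; first by have := ltn_ord i; lia.
by have := ltn_ord (dTs d p).1; lia.
Qed.

Definition uidx_fun : {ffun 'I_k -> 'I_n} := [ffun p => Ordinal (uidx_lt p)].
Definition widx_fun : {ffun 'I_k -> 'I_n} := [ffun p => Ordinal (widx_lt p)].

Lemma uidx_row :
  {in Sc d &, forall p q, (uidx d p == uidx d q) = ((dT d p).1 == (dT d q).1)}.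
Proof. by move=> p q Sp Sq; rewrite !uidx_Sc. Qed.

Lemma widx_row :
  {in Tc d &, forall p q, (widx n d p == widx n d q) = ((dTs d p).1 == (dTs d q).1)}.
Proof.
move=> p q Sp Sq; rewrite !widx_Tc // -val_eqE /=.
have := ltn_ord (dTs d p).1; have := ltn_ord (dTs d q).1.
by case: (dTs d p).1 (dTs d q).1 => a ? [b ?] /= ? ?; apply/eqP/eqP; lia.
Qed.

Lemma csts_support_young rho gam rho' gam' :
  rho \in row_grp (Sc d) (dT d) -> gam \in col_grp (Sc d) (dT d) ->
  rho' \in row_grp (Tc d) (dTs d) -> gam' \in col_grp (Tc d) (dTs d) ->
  csts_support d (enum 'I_(k - r)) [ffun a => uidx_fun (rho (gam a))]
                                   [ffun a => widx_fun (rho' (gam' a))]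
  = (gam == 1%g) && (gam' == 1%g).
Proof.
move=> rhoR gamC rho'R gam'C; rewrite /csts_support -!codomE.
rewrite -(col_grp_label_fixed uidx_row inj_T gamC).
rewrite -(col_grp_label_fixed widx_row inj_Ts gam'C).
have nSc i : ~~ Sc d (ds d i) by rewrite /Sc negbK codom_f.
have nTc i : ~~ Tc d (dt d i) by rewrite /Tc negbK codom_f.
have -> : all (fun i => [ffun a => uidx_fun (rho (gam a))] (ds d i) ==
                        [ffun a => widx_fun (rho' (gam' a))] (dt d i)) (enum 'I_(k - r)).
  apply/allP => i _; rewrite !ffunE (col_grp_fix gamC (nSc i)) (row_grp_fix rhoR (nSc i)).
  rewrite (col_grp_fix gam'C (nTc i)) (row_grp_fix rho'R (nTc i)).
  by rewrite -val_eqE /= uidx_s // widx_t.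
rewrite andbT; congr andb; apply: eq_forallb => p; rewrite !ffunE /=.
  by rewrite (row_grp_label uidx_row).
by rewrite (row_grp_label widx_row).
Qed.

Lemma sum_sgn_delta (A : {set {perm 'I_k}}) (c : C) :
  1%g \in A -> \sum_(s in A) sgn C s * ((s == 1%g)%:R * c) = c.
Proof.
move=> A1; rewrite (bigD1 1%g) //= eqxx /sgn odd_perm1 !mul1r big1 ?addr0 //.
by move=> s /andP[_ /negbTE ->]; rewrite mul0r mulr0.
Qed.

Lemma yx_idx_funE : yx C n d (uidx_fun, widx_fun) =
  (#|row_grp (Sc d) (dT d)| * #|row_grp (Tc d) (dTs d)|)%:R :> C.
Proof.
rewrite /yx youngVE /= natrM mulrC.
have inner rho gam : rho \in row_grp (Sc d) (dT d) -> gam \in col_grp (Sc d) (dT d) ->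
    young (@actVs C n k) (row_grp (Tc d) (dTs d)) (col_grp (Tc d) (dTs d))
      (cst d (xprime C n d)) ([ffun a => uidx_fun (rho (gam a))], widx_fun)
    = (gam == 1%g)%:R * #|row_grp (Tc d) (dTs d)|%:R.
  move=> rhoR gamC; rewrite youngVsE /= mulr_natr -sumr_const.
  apply: eq_bigr => rho' rho'R; rewrite -[RHS](sum_sgn_delta _ (col_grp1 (Tc d) (dTs d))).
  apply: eq_bigr => gam' gam'C.
  by rewrite cst_csts csts_xprimeE ?enum_uniq // csts_support_young // andbC -mulnb natrM.
rewrite mulr_natr -sumr_const; apply: eq_bigr => rho rhoR.
rewrite -[RHS](sum_sgn_delta _ (col_grp1 (Sc d) (dT d))); apply: eq_bigr => gam gamC.
by rewrite inner.
Qed.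

End YoungSymmetrizerValue.

Lemma eop_yx_eq0 (C : fieldType) n k r (d : data k r) i :
  n%:R != 0 :> C -> injective (ds d) -> injective (dt d) ->
  ds d i = dt d i -> eop (yx C n d) = 0.
Proof.
move=> n0 inj_s inj_t st; rewrite eop_eops.
apply: (eops_diag_at_eq0 (a := ds d i)) => //; first by rewrite mem_enum.
have nSc : ~~ Sc d (ds d i) by rewrite /Sc negbK codom_f.
have nTc : ~~ Tc d (ds d i) by rewrite /Tc negbK st codom_f.
apply: diag_at_young => [s z|s /row_grp_fix -> //|s /col_grp_fix -> //|].
  exact: diag_at_actV.
apply: diag_at_young => [s z|s /row_grp_fix -> //|s /col_grp_fix -> //|].
  exact: diag_at_actVs.
by rewrite cst_csts; apply: diag_at_csts => //; rewrite mem_enum.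
Qed.

Section NonVanishing.
Variables (C : numFieldType) (n k r : nat) (d : data k r).
Hypotheses (hkn : (2 * k <= n)%N) (hrk : (r <= k)%N).
Hypotheses (inj_s : injective (ds d)) (inj_t : injective (dt d)).
Hypotheses (inj_T : {in Sc d &, injective (dT d)}) (inj_Ts : {in Tc d &, injective (dTs d)}).
Hypotheses (row_T : {in Sc d, forall p, (dT d p).1 < r}%N)
           (row_Ts : {in Tc d, forall p, (dTs d p).1 < r}%N).

Let le_kn : (k <= n)%N. Proof. lia. Qed.

(* A V-index of x' is either r + i in slot s_i or a row index < r; a V^*-index is
   either r + j in slot t_j or n - 1 - (a row index) >= n - r >= k. *)
Lemma idx_fun_offdiag : cond d -> forall p, uidx_fun d hrk le_kn p != widx_fun d hrk le_kn p.
Proof.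
move=> st p; rewrite -val_eqE !ffunE /=.
have notin_codom (f : 'I_(k - r) -> 'I_k) : (forall i, (f i == p) = false) -> p \notin codom f.
  by move=> fp; apply/codomP => -[i pE]; have := fp i; rewrite pE eqxx.
rewrite /uidx /widx; case: pickP => [i /eqP si|nS]; case: pickP => [j /eqP tj|nT].
- apply/eqP => ij; have eij : i = j by apply: val_inj => /=; lia.
  by have := st i; rewrite si eij tj eqxx.
- have := row_Ts (notin_codom _ nT); have := ltn_ord i; lia.
- have := row_T (notin_codom _ nS); lia.
- have := row_T (notin_codom _ nS); have := row_Ts (notin_codom _ nT); lia.
Qed.

Lemma eop_yx_neq0 : cond d -> eop (yx C n d) != 0.
Proof.
move=> st; apply/eqP.
move=> /(congr1 (fun x : tensor C n k => x (uidx_fun d hrk le_kn, widx_fun d hrk le_kn))).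
rewrite /= ffunE eop_eops eops_offdiagE; last exact: idx_fun_offdiag.
rewrite yx_idx_funE // => /eqP; rewrite pnatr_eq0 muln_eq0.
by case/orP => /eqP/card0_eq/(_ 1%g); rewrite row_grp1.
Qed.

End NonVanishing.

Lemma size_partition r l : is_partition r l -> (size l <= r)%N.
Proof.
case/and3P => _ l_pos /eqP <-; elim: l l_pos => //= a l IH /andP[a_pos /IH]; lia.
Qed.

Lemma std_tableau_row k r l (S : pred 'I_k) T p :
  is_partition r l -> std_tableau l S T -> S p -> ((T p).1 < r)%N.
Proof.
move=> /size_partition lr [inT _ _ _ _] /inT /andP[rl _]; lia.
Qed.

Lemma increasing_ord_inj m m' (f : 'I_m -> 'I_m') :
  (forall i j : 'I_m, (i < j)%N -> (f i < f j)%N) -> injective f.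
Proof.
move=> f_inc i j fij; apply/eqP; rewrite -val_eqE.
by case: ltngtP => // /f_inc; rewrite fij ltnn.
Qed.

Lemma eop_yx_neq0_iff (C : numFieldType) n k r lam mu (d : data k r) :
  (2 * k <= n)%N -> (r <= k)%N -> is_partition r lam -> is_partition r mu ->
  valid lam mu d -> (eop (yx C n d) != 0 <-> cond d).
Proof.
move=> hkn hrk plam pmu [s_inc inj_t T_std Ts_std].
have inj_s := increasing_ord_inj s_inc.
split => [nz i|]; last first.
  move: (T_std) (Ts_std) => -[_ inj_T _ _ _] [_ inj_Ts _ _ _].
  apply: eop_yx_neq0 => // p Sp.
    exact: std_tableau_row plam T_std Sp.
  exact: std_tableau_row pmu Ts_std Sp.
apply: contra nz => /eqP st; apply/eqP/(eop_yx_eq0 _ inj_s inj_t st).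
by rewrite pnatr_eq0 -lt0n; have := ltn_ord i; lia.
Qed.

Section SpanUnderEop.
Variables (C : fieldType) (n k r : nat).
Variables (P : data k r -> Prop) (G : data k r -> tensor C n k).

Lemma inspan_eop_neq0 :
  (exists m, inspan P G m /\ eop m != 0) <-> exists d, P d /\ eop (G d) != 0.
Proof.
split => [[m [[F [a [PF ->]]]]]|[d [Pd nz]]].
  rewrite eop_sum.
  have [/hasP [d dF nz] _|/hasPn all0] := boolP (has (fun d => eop (G d) != 0) F).
    by exists d; split; [exact: PF|].
  by rewrite big_seq big1 ?eqxx // => d /all0 /negPn /eqP ->; rewrite scaler0.
exists (G d); split => //; exists [:: d], (fun _ => 1).
by rewrite big_seq1 scale1r; split => // d'; rewrite inE => /eqP ->.
Qed.

Lemma inspan_eop v :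
  (exists m, inspan P G m /\ v = eop m) <->
  inspan (fun d => P d /\ eop (G d) != 0) (fun d => eop (G d)) v.
Proof.
split => [[m [[F [a [PF ->]]] ->]]|[F [a [PF ->]]]].
  exists [seq d <- F | eop (G d) != 0], a; split.
    by move=> d; rewrite mem_filter => /andP[nz /PF].
  rewrite eop_sum big_filter [RHS]big_mkcond /=; apply: eq_bigr => d _.
  by case: eqP => [-> |]; rewrite ?scaler0.
exists (\sum_(d <- F) a d *: G d); rewrite eop_sum; split => //.
by exists F, a; split => // d /PF [].
Qed.

End SpanUnderEop.

Theorem lemma3p4 (C : numClosedFieldType) (n k r : nat) (lam mu : seq nat) :
  (2 * k <= n)%N -> (r <= k)%N -> is_partition r lam -> is_partition r mu ->
  [/\ (forall d : data k r, valid lam mu d ->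
          (eop (@yx C n k r d) != 0 <-> cond d)),
      ((exists m, inspan (valid lam mu) (@yx C n k r) m /\ eop m != 0) <->
         (exists d : data k r, valid lam mu d /\ cond d))
    & (exists d : data k r, valid lam mu d /\ cond d) ->
      forall v : tensor C n k,
        (exists m, inspan (valid lam mu) (@yx C n k r) m /\ v = eop m) <->
        inspan (fun d => valid lam mu d /\ eop (@yx C n k r d) != 0)
               (fun d => eop (@yx C n k r d)) v].
Proof.
move=> hkn hrk plam pmu.
have neq0_iff := eop_yx_neq0_iff C hkn hrk plam pmu.
split=> [//||_ v]; last exact: inspan_eop.
rewrite inspan_eop_neq0; split=> -[d [vd h]]; exists d; split=> //; exact/neq0_iff.
Qed.
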